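(* Let $\mu\in[0,1/2]$, $d=\sqrt{1-3\mu+3\mu^2}$, $\lambda_1=\tfrac32(1-d)$, $\lambda_2=\tfrac32(1+d)$, and consider the planar system $\ddot x-2\dot y=\Omega_x$, $\ddot y+2\dot x=\Omega_y$ with $\Omega(x,y)=\tfrac12(\lambda_2x^2+\lambda_1y^2)+\frac{1}{\sqrt{x^2+y^2}}$, and its equilibrium points $L_{1,2}=(\pm\lambda_2^{-1/3},0)$. Linearizing at $L_1$ or $L_2$, with matrix $A=\begin{pmatrix}0&0&1&0\\0&0&0&1\\ \Omega_{xx}&\Omega_{xy}&0&2\\ \Omega_{xy}&\Omega_{yy}&-2&0\end{pmatrix}$ (second derivatives evaluated at the point), whose characteristic polynomial is $\lambda^4+\mathcal A\lambda^2+B$ with $\mathcal A=4-\Omega_{xx}-\Omega_{yy}$ and $B=\Omega_{xx}\Omega_{yy}-\Omega_{xy}^2$, one has $B<0$ for all $\mu\in[0,1/2]$. Consequently $L_1$ and $L_2$ are unstable for this range of $\mu$; in fact the eigenvalues of $A$ are $\pm\Lambda$ and $\pm i\omega$ with $\Lambda>0$, $\omega>0$.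
   Context: This is the planar Hill approximation of the restricted four-body problem (in rotated coordinates) near a small mass at a vertex of an equilateral triangle with masses $1-\mu$ and $\mu$. *)

From HB Require Import structures.
From mathcomp Require Import all_boot all_order all_algebra.
From mathcomp Require Import all_classical all_reals all_analysis.
From mathcomp Require Import complex.
Set Implicit Arguments. Unset Strict Implicit. Unset Printing Implicit Defensive.
Import Order.TTheory GRing.Theory Num.Theory.
Local Open Scope ring_scope.

Section Hill.
Variable R : realType.
Variable mu : R.

Definition dd : R := Num.sqrt (1 - 3 * mu + 3 * mu ^+ 2).
Definition lam1 : R := 3 / 2 * (1 - dd).
Definition lam2 : R := 3 / 2 * (1 + dd).

Definition Omega (x y : R) : R :=
  2^-1 * (lam2 * x ^+ 2 + lam1 * y ^+ 2) + (Num.sqrt (x ^+ 2 + y ^+ 2))^-1.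

Definition Omega_xx (x y : R) : R :=
  derive1 (fun s => derive1 (fun t => Omega t y) s) x.
Definition Omega_yy (x y : R) : R :=
  derive1 (fun s => derive1 (fun t => Omega x t) s) y.
Definition Omega_xy (x y : R) : R :=
  derive1 (fun s => derive1 (fun t => Omega t s) x) y.

Definition L1 : R * R := (lam2 `^ (- 3^-1), 0).
Definition L2 : R * R := (- lam2 `^ (- 3^-1), 0).

Definition mx4 (l : seq (seq R)) : 'M[R]_4 :=
  \matrix_(i < 4, j < 4) nth 0 (nth [::] l i) j.

Definition linA (p : R * R) : 'M[R]_4 :=
  let: (x, y) := p in
  mx4 [:: [:: 0; 0; 1; 0];
          [:: 0; 0; 0; 1];
          [:: Omega_xx x y; Omega_xy x y; 0; 2];
          [:: Omega_xy x y; Omega_yy x y; -2; 0]].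

Definition hillA (p : R * R) : R := 4 - Omega_xx p.1 p.2 - Omega_yy p.1 p.2.
Definition hillB (p : R * R) : R :=
  Omega_xx p.1 p.2 * Omega_yy p.1 p.2 - Omega_xy p.1 p.2 ^+ 2.

End Hill.

Definition cplx_mx (R : realType) (n : nat) (M : 'M[R]_n) : 'M[complex.complex R]_n :=
  map_mx (fun a => complex.Complex a 0) M.

(** The linearization at an equilibrium (x, 0) of the Hill system has
    characteristic polynomial X^4 + A X^2 + B with B = Omega_xx Omega_yy - Omega_xy^2.
    On the x-axis Omega_xy = 0, Omega_xx = lambda_2 + 2/|x|^3 and
    Omega_yy = lambda_1 - 1/|x|^3, and at L1, L2 one has 1/|x|^3 = lambda_2, so
    B = 3 lambda_2 (lambda_1 - lambda_2) = -9 lambda_2 d < 0.  A biquadratic with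
    B < 0 has roots X^2 = s1 > 0 and X^2 = -s2 < 0, i.e. a real pair +-Lambda and
    an imaginary pair +-i omega. *)
From HB Require Import structures.
From mathcomp Require Import all_boot all_order all_algebra.
From mathcomp Require Import all_classical all_reals all_analysis.
From mathcomp Require Import complex.
From mathcomp Require Import ring lra.
Import Order.TTheory GRing.Theory Num.Theory.
Local Open Scope ring_scope.

Definition matrix4 {T : nzRingType} (l : seq (seq T)) : 'M[T]_4 :=
  \matrix_(i < 4, j < 4) nth 0 (nth [::] l i) j.

Lemma det_matrix4 (T : comNzRingType) (a b c d e f g h i j k l m n o p : T) :
  \det (matrix4 [:: [:: a; b; c; d]; [:: e; f; g; h]; [:: i; j; k; l]; [:: m; n; o; p]])
  = a * (f * (k * p - l * o) - g * (j * p - l * n) + h * (j * o - k * n))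
  - b * (e * (k * p - l * o) - g * (i * p - l * m) + h * (i * o - k * m))
  + c * (e * (j * p - l * n) - f * (i * p - l * m) + h * (i * n - j * m))
  - d * (e * (j * o - k * n) - f * (i * o - k * m) + g * (i * n - j * m)).
Proof.
do 3!rewrite !(expand_det_row _ ord0) !big_ord_recl !big_ord0 /cofactor.
by rewrite !det_mx11 !mxE /= /bump /=; ring.
Qed.

(* The linearization of x'' - 2 y' = f_x, y'' + 2 x' = f_y, where (a, b; b, c)
   is the Hessian of f. *)
Definition coriolis_mx {T : nzRingType} (a b c : T) : 'M[T]_4 :=
  matrix4 [:: [:: 0; 0; 1; 0]; [:: 0; 0; 0; 1]; [:: a; b; 0; 2]; [:: b; c; -2; 0]].

Lemma char_poly_coriolis_mx (T : comNzRingType) (a b c : T) :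
  char_poly (coriolis_mx a b c) = 'X^4 + (4 - a - c)%:P * 'X^2 + (a * c - b ^+ 2)%:P.
Proof.
rewrite /char_poly; have -> : char_poly_mx (coriolis_mx a b c) =
    matrix4 [:: [:: 'X; 0; -1; 0]; [:: 0; 'X; 0; -1];
                [:: - a%:P; - b%:P; 'X; - 2%:P]; [:: - b%:P; - c%:P; 2%:P; 'X]].
  apply/matrixP => i j; rewrite !mxE.
  case: i => [[|[|[|[|?]]]] ?] //; case: j => [[|[|[|[|?]]]] ?] //=;
    by rewrite ?mulr1n ?mulr0n ?subr0 ?sub0r ?polyC0 ?polyC1 ?polyCN ?opprK.
by rewrite det_matrix4 !polyCB !polyCM ?polyCN ?polyC1; ring.
Qed.

Lemma quadratic_roots_opposite_signs (R : rcfType) (A B : R) : B < 0 ->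
  exists s1 s2 : R, [/\ 0 < s1, 0 < s2, A = s2 - s1 & B = - (s1 * s2)].
Proof.
move=> B_lt0; set D := Num.sqrt (A ^+ 2 - 4 * B).
have D_sq : D ^+ 2 = A ^+ 2 - 4 * B by rewrite sqr_sqrtr //; nra.
have D_ge0 : 0 <= D := sqrtr_ge0 _.
have -> : B = (A ^+ 2 - D ^+ 2) / 4 by rewrite D_sq; field.
by exists ((D - A) / 2), ((D + A) / 2); split; [nra | nra | field | field].
Qed.

Lemma mul_pm_polyC (R : comNzRingType) (z : R) :
  ('X - z%:P) * ('X - (- z)%:P) = 'X^2 - (z ^+ 2)%:P.
Proof. by rewrite polyCN rmorphXn; ring. Qed.

Section Biquadratic.
Local Open Scope complex_scope.

Lemma biquadratic_roots (R : rcfType) (A B : R) : B < 0 ->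
  exists Lam omega : R, [/\ 0 < Lam, 0 < omega &
    map_poly (real_complex R) ('X^4 + A%:P * 'X^2 + B%:P) =
    \prod_(z <- [:: Complex Lam 0; Complex (- Lam) 0; Complex 0 omega; Complex 0 (- omega)])
      ('X - z%:P)].
Proof.
move=> /(@quadratic_roots_opposite_signs _ A) [s1 [s2 [s1_gt0 s2_gt0 -> ->]]].
exists (Num.sqrt s1), (Num.sqrt s2); split; rewrite ?sqrtr_gt0 //.
have neg_re (a : R) : Complex (- a) 0 = - Complex a 0 by simpc.
have neg_im (a : R) : Complex 0 (- a) = - Complex 0 a by simpc.
have sq_re : Complex (Num.sqrt s1) 0 ^+ 2 = s1%:C.
  by rewrite expr2; simpc; rewrite -expr2 sqr_sqrtr ?ltW.
have sq_im : Complex 0 (Num.sqrt s2) ^+ 2 = - s2%:C.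
  by rewrite expr2; simpc; rewrite -expr2 sqr_sqrtr ?ltW.
rewrite !big_cons big_nil mulr1 neg_re neg_im mulrA !mul_pm_polyC sq_re sq_im.
by rewrite !(rmorphD, rmorphM, rmorphN) /= map_polyX !map_polyC /=; ring.
Qed.

End Biquadratic.

Section HillPotential.
Variable R : realType.

Definition inv_rad (n : nat) (x y : R) : R := (Num.sqrt (x ^+ 2 + y ^+ 2) ^+ n)^-1.

Lemma inv_radC n x y : inv_rad n x y = inv_rad n y x.
Proof. by rewrite /inv_rad addrC. Qed.

Lemma inv_radN n x y : inv_rad n (- x) y = inv_rad n x y.
Proof. by rewrite /inv_rad sqrrN. Qed.

Lemma inv_rad_axis n x : inv_rad n x 0 = `|x| ^- n.
Proof. by rewrite /inv_rad expr0n addr0 sqrtr_sqr. Qed.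

Lemma inv_radD2 n x y : inv_rad n x y / (x ^+ 2 + y ^+ 2) = inv_rad n.+2 x y.
Proof.
by rewrite /inv_rad -{2}(sqr_sqrtr (addr_ge0 (sqr_ge0 x) (sqr_ge0 y))) -invfM -exprD addn2.
Qed.

Lemma sqrD_gt0l (x y : R) : x != 0 -> 0 < x ^+ 2 + y ^+ 2.
Proof. by move=> x_neq0; rewrite ltr_wpDr ?sqr_ge0 ?exprn_even_gt0. Qed.

Lemma is_derive_inv_rad (n : nat) (x y : R) : 0 < x ^+ 2 + y ^+ 2 ->
  is_derive x 1 (fun t => inv_rad n t y) (- (n%:R * x * inv_rad n.+2 x y)).
Proof.
pose u t := t ^+ 2 + y ^+ 2; move=> r2_gt0; have {}r2_gt0 : 0 < u x := r2_gt0.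
set r := Num.sqrt (u x).
have r_neq0 : r != 0 by rewrite sqrtr_eq0 -ltNge.
have d_u : is_derive x 1 u (2 * x).
  by apply: is_derive_eq; rewrite /GRing.scale /=; ring.
have d_r := is_derive1_comp (is_derive1_sqrt r2_gt0) d_u.
have d_rn := @is_deriveX _ _ _ n x 1 _ d_r.
have rn_neq0 : ((Num.sqrt \o u) ^+ n) x != 0 by rewrite exprfctE expf_neq0.
have := is_deriveV rn_neq0 d_rn.
rewrite (_ : (fun t => _) = fun t => inv_rad n t y); last first.
  by apply/funext => t; rewrite exprfctE.
move/is_derive_eq; apply; clear d_rn rn_neq0.
have ux_sq : u x = r ^+ 2 by rewrite sqr_sqrtr // ltW.
rewrite exprfctE /= -/r -inv_radD2 /inv_rad -/(u x) -/r ux_sq.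
case: n => [|n]; rewrite /GRing.scale /=; first by rewrite !mul0r mulr0 oppr0.
have rn_neq0 : r ^+ n != 0 by rewrite expf_neq0.
rewrite [r ^+ n.+1]exprS; move: (r ^+ n) rn_neq0 => q q_neq0.
by field; rewrite r_neq0 q_neq0.
Qed.

Lemma is_derive_inv_rad_y (n : nat) (x y : R) : 0 < x ^+ 2 + y ^+ 2 ->
  is_derive y 1 (fun t => inv_rad n x t) (- (n%:R * y * inv_rad n.+2 x y)).
Proof.
rewrite addrC => /(is_derive_inv_rad n); rewrite inv_radC.
by under [fun t => _]funext do rewrite inv_radC.
Qed.

Lemma nbhs_neq0 (x : R) : x != 0 -> \forall s \near (x : R^o), s != 0.
Proof.
case: ltgtP => // [x_lt0 | x_gt0] _.
- by apply: filterS (lt_nbhsl x_lt0) => s /lt_eqF ->.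
- by apply: filterS (lt_nbhsr x_gt0) => s /gt_eqF ->.
Qed.

Variable mu : R.

Lemma Omega_inv_rad (x y : R) :
  Omega mu x y = 2^-1 * (lam2 mu * x ^+ 2 + lam1 mu * y ^+ 2) + inv_rad 1 x y.
Proof. by rewrite /Omega /inv_rad expr1. Qed.

Lemma is_derive_Omega_x (x y : R) : 0 < x ^+ 2 + y ^+ 2 ->
  is_derive x 1 (fun t => Omega mu t y) (lam2 mu * x - x * inv_rad 3 x y).
Proof.
move=> /(is_derive_inv_rad 1) d_inv.
under [fun t => _]funext do rewrite Omega_inv_rad.
by apply: is_derive_eq; rewrite /GRing.scale /=; field.
Qed.

Lemma is_derive_Omega_y (x y : R) : 0 < x ^+ 2 + y ^+ 2 ->
  is_derive y 1 (fun t => Omega mu x t) (lam1 mu * y - y * inv_rad 3 x y).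
Proof.
move=> /(is_derive_inv_rad_y 1) d_inv.
under [fun t => _]funext do rewrite Omega_inv_rad.
by apply: is_derive_eq; rewrite /GRing.scale /=; field.
Qed.

Lemma Omega_xx_axis (x : R) : x != 0 -> Omega_xx mu x 0 = lam2 mu + 2 * inv_rad 3 x 0.
Proof.
move=> x_neq0.
(* Omega is singular at the origin, so the first derivative is only known near x. *)
have Omega_x_near : \forall s \near (x : R^o),
    derive1 (fun t => Omega mu t 0) s = lam2 mu * s - s * inv_rad 3 s 0.
  near=> s; have s_neq0 : s != 0 by near: s; exact: nbhs_neq0.
  have := is_derive_Omega_x _ _ (sqrD_gt0l s 0 s_neq0).
  by rewrite derive1E => /@derive_val.
rewrite /Omega_xx derive1E (near_eq_derive _ Omega_x_near).
have := is_derive_inv_rad 3 _ _ (sqrD_gt0l x 0 x_neq0).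
rewrite -inv_radD2 expr0n addr0 => d_inv.
have : is_derive x 1 (fun s => lam2 mu * s - s * inv_rad 3 s 0) (lam2 mu + 2 * inv_rad 3 x 0).
  by apply: is_derive_eq; rewrite /GRing.scale /=; field.
by move/@derive_val.
Unshelve. all: by end_near.
Qed.

Lemma Omega_yy_axis (x : R) : x != 0 -> Omega_yy mu x 0 = lam1 mu - inv_rad 3 x 0.
Proof.
move=> x_neq0; rewrite /Omega_yy.
have -> : (fun s => derive1 (Omega mu x) s) = fun s => lam1 mu * s - s * inv_rad 3 x s.
  apply/funext => s; have := is_derive_Omega_y _ _ (sqrD_gt0l x s x_neq0).
  by rewrite derive1E => /@derive_val.
have d_inv := is_derive_inv_rad_y 3 _ _ (sqrD_gt0l x 0 x_neq0).
have : is_derive (0 : R) 1 (fun s => lam1 mu * s - s * inv_rad 3 x s) (lam1 mu - inv_rad 3 x 0).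
  by apply: is_derive_eq; rewrite /GRing.scale /=; ring.
by rewrite derive1E => /@derive_val.
Qed.

Lemma Omega_xy_axis (x : R) : x != 0 -> Omega_xy mu x 0 = 0.
Proof.
move=> x_neq0; rewrite /Omega_xy.
have -> : (fun s => derive1 (Omega mu ^~ s) x) = fun s => lam2 mu * x - x * inv_rad 3 x s.
  apply/funext => s; have := is_derive_Omega_x _ _ (sqrD_gt0l x s x_neq0).
  by rewrite derive1E => /@derive_val.
have d_inv := is_derive_inv_rad_y 3 _ _ (sqrD_gt0l x 0 x_neq0).
have : is_derive (0 : R) 1 (fun s => lam2 mu * x - x * inv_rad 3 x s) 0.
  by apply: is_derive_eq; rewrite /GRing.scale /=; ring.
by rewrite derive1E => /@derive_val.
Qed.

(* No restriction on mu is needed: 1 - 3 mu + 3 mu^2 = 3 (mu - 1/2)^2 + 1/4. *)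
Lemma dd_gt0 : 0 < dd mu.
Proof. by rewrite /dd sqrtr_gt0; have := sqr_ge0 (2 * mu - 1); nra. Qed.

Lemma lam2_gt0 : 0 < lam2 mu.
Proof. by rewrite /lam2; have := dd_gt0; lra. Qed.

Lemma inv_rad_equilibrium (x : R) : x = (L1 mu).1 \/ x = (L2 mu).1 ->
  x != 0 /\ inv_rad 3 x 0 = lam2 mu.
Proof.
have a_gt0 : 0 < lam2 mu `^ (- 3^-1) by rewrite powR_gt0 // lam2_gt0.
have a_cube : (lam2 mu `^ (- 3^-1)) ^+ 3 = (lam2 mu)^-1.
  rewrite -powR_mulrn ?powR_ge0 // -powRrM (_ : - 3^-1 * 3%:R = -1); last by field.
  by rewrite powR_inv1 // ltW // lam2_gt0.
have inv_rad_a : inv_rad 3 (lam2 mu `^ (- 3^-1)) 0 = lam2 mu.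
  by rewrite inv_rad_axis gtr0_norm // a_cube invrK.
by case=> ->; rewrite ?inv_radN ?oppr_eq0 gt_eqF.
Qed.

Lemma hillB_equilibrium_lt0 (p : R * R) : p = L1 mu \/ p = L2 mu -> hillB mu p < 0.
Proof.
move=> Lp; have -> : p = (p.1, 0) by case: Lp => ->.
have [x_neq0 inv_rad_x] : p.1 != 0 /\ inv_rad 3 p.1 0 = lam2 mu.
  by apply: inv_rad_equilibrium; case: Lp => ->; [left | right].
have -> : hillB mu (p.1, 0) = - (9 * lam2 mu * dd mu).
  rewrite /hillB /= Omega_xx_axis // Omega_yy_axis // Omega_xy_axis // inv_rad_x.
  by rewrite /lam1 /lam2; field.
by rewrite oppr_lt0; have := dd_gt0; have := lam2_gt0; nra.
Qed.

End HillPotential.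

Theorem proposition1 (R : realType) (mu : R) :
  0 <= mu <= 2^-1 ->
  forall p : R * R, p = L1 mu \/ p = L2 mu ->
    char_poly (linA mu p) = 'X^4 + polyC (hillA mu p) * 'X^2 + polyC (hillB mu p) /\
    hillB mu p < 0 /\
    exists Lam omega : R, 0 < Lam /\ 0 < omega /\
      char_poly (cplx_mx (linA mu p)) =
        \prod_(z <- [:: complex.Complex Lam 0; complex.Complex (- Lam) 0;
                        complex.Complex 0 omega; complex.Complex 0 (- omega)])
          ('X - z%:P).
Proof.
move=> _ p Lp.
have B_lt0 : hillB mu p < 0 by apply: hillB_equilibrium_lt0.
have [Lam [omega [Lam_gt0 omega_gt0 roots]]] := @biquadratic_roots _ (hillA mu p) _ B_lt0.
have char_linA : char_poly (linA mu p) = 'X^4 + (hillA mu p)%:P * 'X^2 + (hillB mu p)%:P.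
  by case: p {Lp B_lt0 roots} => x y; exact: char_poly_coriolis_mx.
split=> //; split=> //; exists Lam, omega; split=> //; split=> //.
by rewrite -roots -char_linA map_char_poly.
Qed.
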